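(* Let $(a_{ij})_{1\le i\le v,\,1\le j\le w}$ be a matrix of nonnegative real numbers and let $\rho,\gamma\ge 0$. Put $a_{i\star}=\sum_{j=1}^w a_{ij}$, $a_{\star j}=\sum_{i=1}^v a_{ij}$ and $e=\sum_{i=1}^v\sum_{j=1}^w a_{ij}$. If $a_{i\star}\ge 2\rho$ for all $i$ and $a_{\star j}\ge 2\gamma$ for all $j$, then $$\sum_{i=1}^v\sum_{j=1}^w a_{ij}(a_{i\star}-\rho)(a_{\star j}-\gamma)\ge e\,(e/v-\rho)(e/w-\gamma),$$ with equality exactly if all $a_{i\star}$ are equal to one another and all $a_{\star j}$ are equal to one another. *)

From mathcomp Require Import all_boot all_order all_algebra.
Set Implicit Arguments. Unset Strict Implicit. Unset Printing Implicit Defensive.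
Import Order.TTheory GRing.Theory Num.Theory.
Local Open Scope ring_scope.

Definition rowsum (R : realFieldType) (v w : nat) (a : 'M[R]_(v, w)) (i : 'I_v) : R :=
  \sum_(j < w) a i j.
Definition colsum (R : realFieldType) (v w : nat) (a : 'M[R]_(v, w)) (j : 'I_w) : R :=
  \sum_(i < v) a i j.
Definition esum (R : realFieldType) (v w : nat) (a : 'M[R]_(v, w)) : R :=
  \sum_(i < v) \sum_(j < w) a i j.

(** Write [r i], [c j] for the row and column sums and [rbar = e / v], [cbar = e / w].
    Each summand splits as
    [a i j * (r i - rho) * (c j - gamma) = a i j * (rbar - rho) * (cbar - gamma)
       + (cbar - gamma) * rbar * a i j * (r i - rbar) / r i
       + (rbar - rho) * cbar * a i j * (c j - cbar) / c j + a i j * defect / (r i * c j)].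
    Summed over the matrix, the first term is the bound and the next two are nonnegative
    multiples of the numbers of zero rows and zero columns. The defect
    [(cbar - gamma) (r i - rbar)^2 c j + (rbar - rho) (c j - cbar)^2 r i
       + (r i - rbar) (c j - cbar) r i c j]
    is nonnegative: trivially when [r i - rbar] and [c j - cbar] have the same sign, and
    otherwise because [r i, rbar >= 2 rho] and [c j, cbar >= 2 gamma] bound it below by a
    sum of squares. Equality forces every defect with [a i j != 0] to vanish, i.e.
    [r i = rbar] and [c j = cbar]. *)

From mathcomp Require Import all_boot all_order all_algebra.
From mathcomp Require Import ring lra.
Set Implicit Arguments. Unset Strict Implicit. Unset Printing Implicit Defensive.
Import Order.TTheory GRing.Theory Num.Theory.
Local Open Scope ring_scope.

Definition defect (F : realFieldType) (r c rbar cbar rho gamma : F) : F :=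
  r * c * (r - rho) * (c - gamma) - r * c * (rbar - rho) * (cbar - gamma)
  - (cbar - gamma) * rbar * c * (r - rbar) - (rbar - rho) * cbar * r * (c - cbar).

Lemma defectE (F : realFieldType) (r c rbar cbar rho gamma : F) :
  defect r c rbar cbar rho gamma =
  (cbar - gamma) * (r - rbar) ^+ 2 * c + (rbar - rho) * (c - cbar) ^+ 2 * r
  + (r - rbar) * (c - cbar) * r * c.
Proof. by rewrite /defect; ring. Qed.

Lemma defect_sym (F : realFieldType) (r c rbar cbar rho gamma : F) :
  defect r c rbar cbar rho gamma = defect c r cbar rbar gamma rho.
Proof. by rewrite /defect; ring. Qed.

Lemma defect_split (F : realFieldType) (x r c rbar cbar rho gamma : F) :
  r != 0 -> c != 0 ->
  x * (r - rho) * (c - gamma) =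
  x * ((rbar - rho) * (cbar - gamma)) + (cbar - gamma) * rbar * (x * ((r - rbar) / r))
  + (rbar - rho) * cbar * (x * ((c - cbar) / c))
  + x * (defect r c rbar cbar rho gamma / (r * c)).
Proof. by move=> r_neq0 c_neq0; rewrite /defect; field; rewrite r_neq0 c_neq0. Qed.

Lemma defect_gt0_crossed (F : realFieldType) (r c rbar cbar rho gamma : F) :
  0 < r -> 0 < c -> 0 <= rho -> 2 * gamma <= c -> 2 * rho <= rbar ->
  rbar < r -> c < cbar -> 0 < defect r c rbar cbar rho gamma.
Proof.
move=> r_gt0 c_gt0 rho_ge0 c_ge rbar_ge rbar_lt c_lt.
set d := r - rbar; set s := cbar - c.
have lower : (s + c / 2) * d ^+ 2 * c + rbar / 2 * s ^+ 2 * r - d * s * r * c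
             <= defect r c rbar cbar rho gamma.
  have d2c_ge0 : 0 <= d ^+ 2 * c by rewrite mulr_ge0 ?sqr_ge0 ?ltW.
  have s2r_ge0 : 0 <= s ^+ 2 * r by rewrite mulr_ge0 ?sqr_ge0 ?ltW.
  have cbar_bound : (s + c / 2) * (d ^+ 2 * c) <= (cbar - gamma) * (d ^+ 2 * c).
    by apply: ler_wpM2r => //; rewrite /s; lra.
  have rbar_bound : rbar / 2 * (s ^+ 2 * r) <= (rbar - rho) * (s ^+ 2 * r).
    by apply: ler_wpM2r => //; lra.
  have -> : defect r c rbar cbar rho gamma =
    (cbar - gamma) * (d ^+ 2 * c) + (rbar - rho) * (s ^+ 2 * r) - d * s * r * c.
    by rewrite defectE /d /s; ring.
  rewrite !mulrA in cbar_bound rbar_bound; lra.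
have square : 2 * r * ((s + c / 2) * d ^+ 2 * c + rbar / 2 * s ^+ 2 * r - d * s * r * c)
              = rbar * (s * r - d * c) ^+ 2 + d ^+ 3 * c ^+ 2.
  by rewrite /d; field.
have : 0 < rbar * (s * r - d * c) ^+ 2 + d ^+ 3 * c ^+ 2.
  apply: ltr_wpDl; first by rewrite mulr_ge0 ?sqr_ge0 //; lra.
  by rewrite mulr_gt0 ?exprn_gt0 // /d; lra.
rewrite -square pmulr_rgt0; lra.
Qed.

Lemma defect_gt0 (F : realFieldType) (r c rbar cbar rho gamma : F) :
  0 < r -> 0 < c -> 0 <= rho -> 0 <= gamma ->
  2 * rho <= r -> 2 * gamma <= c -> 2 * rho <= rbar -> 2 * gamma <= cbar ->
  (r - rbar) * (c - cbar) < 0 -> 0 < defect r c rbar cbar rho gamma.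
Proof.
move=> r_gt0 c_gt0 rho_ge0 gamma_ge0 r_ge c_ge rbar_ge cbar_ge crossed.
case: (ltgtP rbar r) => [rbar_lt | r_lt | r_eq].
- apply: defect_gt0_crossed => //.
  by move: crossed; rewrite pmulr_rlt0 ?subr_gt0 // subr_lt0.
- rewrite defect_sym; apply: defect_gt0_crossed => //.
  by move: crossed; rewrite nmulr_rlt0 ?subr_lt0 // subr_gt0.
- by move: crossed; rewrite r_eq subrr mul0r ltxx.
Qed.

Lemma defect_ge0 (F : realFieldType) (r c rbar cbar rho gamma : F) :
  0 < r -> 0 < c -> 0 <= rho -> 0 <= gamma ->
  2 * rho <= r -> 2 * gamma <= c -> 2 * rho <= rbar -> 2 * gamma <= cbar ->
  0 <= defect r c rbar cbar rho gamma.
Proof.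
move=> r_gt0 c_gt0 rho_ge0 gamma_ge0 r_ge c_ge rbar_ge cbar_ge.
have [crossed|aligned] := ltP ((r - rbar) * (c - cbar)) 0.
  exact/ltW/defect_gt0.
rewrite defectE; apply: addr_ge0; first apply: addr_ge0.
- by rewrite mulr_ge0 ?(ltW c_gt0) // mulr_ge0 ?sqr_ge0 //; lra.
- by rewrite mulr_ge0 ?(ltW r_gt0) // mulr_ge0 ?sqr_ge0 //; lra.
- exact: mulr_ge0 (mulr_ge0 aligned (ltW r_gt0)) (ltW c_gt0).
Qed.

Lemma defect_eq0 (F : realFieldType) (r c rbar cbar rho gamma : F) :
  0 < r -> 0 < c -> 0 <= rho -> 0 <= gamma ->
  2 * rho <= r -> 2 * gamma <= c -> 0 < rbar -> 0 < cbar -> 2 * rho <= rbar -> 2 * gamma <= cbar ->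
  defect r c rbar cbar rho gamma = 0 -> r = rbar /\ c = cbar.
Proof.
move=> r_gt0 c_gt0 rho_ge0 gamma_ge0 r_ge c_ge rbar_gt0 cbar_gt0 rbar_ge cbar_ge defect0.
have [crossed|aligned] := ltP ((r - rbar) * (c - cbar)) 0.
  have := defect_gt0 r_gt0 c_gt0 rho_ge0 gamma_ge0 r_ge c_ge rbar_ge cbar_ge crossed.
  by rewrite defect0 ltxx.
have cbar_term_ge0 : 0 <= (cbar - gamma) * (r - rbar) ^+ 2 * c.
  by rewrite mulr_ge0 ?(ltW c_gt0) // mulr_ge0 ?sqr_ge0 //; lra.
have rbar_term_ge0 : 0 <= (rbar - rho) * (c - cbar) ^+ 2 * r.
  by rewrite mulr_ge0 ?(ltW r_gt0) // mulr_ge0 ?sqr_ge0 //; lra.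
have aligned_term_ge0 := mulr_ge0 (mulr_ge0 aligned (ltW r_gt0)) (ltW c_gt0).
rewrite defectE in defect0.
have /eqP : (cbar - gamma) * (r - rbar) ^+ 2 * c = 0 by lra.
have /eqP : (rbar - rho) * (c - cbar) ^+ 2 * r = 0 by lra.
rewrite !mulf_eq0 !orbb !subr_eq0 !(gt_eqF c_gt0, gt_eqF r_gt0) !orbF.
have [-> ->] : (cbar == gamma) = false /\ (rbar == rho) = false by split; apply: gt_eqF; lra.
by move=> /eqP -> /eqP ->.
Qed.

Section Mean.

Variables (F : realFieldType) (n : nat) (x : 'I_n -> F).
Hypothesis n_gt0 : (0 < n)%N.
Local Notation mean := ((\sum_(k < n) x k) / n%:R).

Let n_neq0 : n%:R != 0 :> F.
Proof. by rewrite pnatr_eq0 -lt0n. Qed.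

Lemma sumr_sub_mean : \sum_(i < n) (x i - mean) = 0.
Proof. by rewrite sumrB sumr_const card_ord -[mean *+ n]mulr_natr divfK // subrr. Qed.

Lemma mean_ge (m : F) : (forall i, m <= x i) -> m <= mean.
Proof.
move=> m_le; rewrite ler_pdivlMr ?ltr0n //.
have : \sum_(k < n) m <= \sum_(k < n) x k by apply: ler_sum.
by rewrite sumr_const card_ord -[m *+ n]mulr_natr.
Qed.

Lemma const_mean : (forall i j, x i = x j) -> forall i, x i = mean.
Proof.
move=> x_const i; rewrite (eq_bigr (fun=> x i)) => [|k _]; last exact: x_const.
by rewrite sumr_const card_ord -[x i *+ n]mulr_natr mulfK.
Qed.

(* Since [x / 0 = 0], a zero [x i] contributes [mean] instead of [x i - mean]. *)
Lemma sum_mul_div_sub_mean :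
  \sum_(i < n) x i * ((x i - mean) / x i) = mean *+ #|[pred i | x i == 0]|.
Proof.
have split_zero i : x i * ((x i - mean) / x i) = (x i - mean) + (if x i == 0 then mean else 0).
  by case: eqP => [->|/eqP xi_neq0]; rewrite ?mul0r ?sub0r ?addNr // mulrC divfK ?addr0.
rewrite (eq_bigr _ (fun i _ => split_zero i)) big_split /= sumr_sub_mean add0r.
by rewrite -big_mkcond sumr_const.
Qed.

End Mean.

Section NonnegativeMatrix.

Variables (F : realFieldType) (v w : nat) (a : 'M[F]_(v, w)).
Hypothesis a_ge0 : forall i j, 0 <= a i j.

Lemma esum_rowsum : esum a = \sum_i rowsum a i.
Proof. by []. Qed.

Lemma esum_colsum : esum a = \sum_j colsum a j.
Proof. exact: exchange_big. Qed.

Lemma mulr_esuml x : esum a * x = \sum_i \sum_j a i j * x.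
Proof. by rewrite mulr_suml; apply: eq_bigr => i _; rewrite mulr_suml. Qed.

Lemma rowsum_ge0 i : 0 <= rowsum a i.
Proof. exact: sumr_ge0. Qed.

Lemma colsum_ge0 j : 0 <= colsum a j.
Proof. exact: sumr_ge0. Qed.

Lemma rowsum_gt0 i j : a i j != 0 -> 0 < rowsum a i.
Proof.
move=> a_neq0; rewrite /rowsum (bigD1 j) //= ltr_pwDl ?sumr_ge0 //.
by rewrite lt_def a_neq0 a_ge0.
Qed.

Lemma colsum_gt0 i j : a i j != 0 -> 0 < colsum a j.
Proof.
move=> a_neq0; rewrite /colsum (bigD1 i) //= ltr_pwDl ?sumr_ge0 //.
by rewrite lt_def a_neq0 a_ge0.
Qed.

End NonnegativeMatrix.

Lemma rowsum_support (F : realFieldType) (v w : nat) (a : 'M[F]_(v, w)) i :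
  rowsum a i != 0 -> exists j, a i j != 0.
Proof.
move=> rowsum_neq0; apply/existsP; apply: contraNT rowsum_neq0 => /existsPn zero_row.
by apply/eqP/big1 => j _; apply/eqP/negPn/zero_row.
Qed.

Lemma colsum_support (F : realFieldType) (v w : nat) (a : 'M[F]_(v, w)) j :
  colsum a j != 0 -> exists i, a i j != 0.
Proof.
move=> colsum_neq0; apply/existsP; apply: contraNT colsum_neq0 => /existsPn zero_col.
by apply/eqP/big1 => i _; apply/eqP/negPn/zero_col.
Qed.

Section MarginSum.

Variables (F : realFieldType) (v w : nat) (a : 'M[F]_(v, w)) (rho gamma : F).
Hypotheses (v_gt0 : (0 < v)%N) (w_gt0 : (0 < w)%N) (a_ge0 : forall i j, 0 <= a i j).

Local Notation r := (rowsum a).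
Local Notation c := (colsum a).
Local Notation e := (esum a).
Local Notation rbar := (esum a / v%:R).
Local Notation cbar := (esum a / w%:R).
Local Notation margin_sum :=
  (\sum_(i < v) \sum_(j < w) a i j * (rowsum a i - rho) * (colsum a j - gamma)).
Local Notation margin_bound := (esum a * (esum a / v%:R - rho) * (esum a / w%:R - gamma)).
Local Notation defect_term i j :=
  (a i j * (defect (rowsum a i) (colsum a j) rbar cbar rho gamma / (rowsum a i * colsum a j))).

Lemma sum_entry_div_rowsum :
  \sum_(i < v) \sum_(j < w) a i j * ((r i - rbar) / r i) = rbar *+ #|[pred i | r i == 0]|.
Proof.
under eq_bigr do rewrite -mulr_suml.
by rewrite esum_rowsum; apply: sum_mul_div_sub_mean.
Qed.

Lemma sum_entry_div_colsum :
  \sum_(i < v) \sum_(j < w) a i j * ((c j - cbar) / c j) = cbar *+ #|[pred j | c j == 0]|.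
Proof.
rewrite exchange_big; under eq_bigr do rewrite -mulr_suml.
by rewrite esum_colsum; apply: sum_mul_div_sub_mean.
Qed.

Lemma margin_sum_decomposition :
  margin_sum = margin_bound
    + (cbar - gamma) * rbar * (rbar *+ #|[pred i | r i == 0]|)
    + (rbar - rho) * cbar * (cbar *+ #|[pred j | c j == 0]|)
    + \sum_(i < v) \sum_(j < w) defect_term i j.
Proof.
have entry_split i j : a i j * (r i - rho) * (c j - gamma) =
    a i j * ((rbar - rho) * (cbar - gamma)) + (cbar - gamma) * rbar * (a i j * ((r i - rbar) / r i))
    + (rbar - rho) * cbar * (a i j * ((c j - cbar) / c j)) + defect_term i j.
  have [->|a_neq0] := eqVneq (a i j) 0; first by rewrite !(mul0r, mulr0, addr0).
  by apply: defect_split; apply: lt0r_neq0; [apply: rowsum_gt0 a_neq0 | apply: colsum_gt0 a_neq0].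
under eq_bigr => i _ do under eq_bigr => j _ do rewrite entry_split.
under eq_bigr do rewrite !big_split /= -!mulr_sumr.
rewrite !big_split /= -!mulr_sumr sum_entry_div_rowsum sum_entry_div_colsum.
by congr (_ + _ + _ + _); rewrite -mulrA [RHS]mulr_esuml.
Qed.

Lemma margin_sum_const_margins :
  (forall i i', r i = r i') -> (forall j j', c j = c j') ->
  margin_sum = margin_bound.
Proof.
move=> r_const c_const.
have r_mean i : r i = rbar by rewrite esum_rowsum; apply: const_mean.
have c_mean j : c j = cbar by rewrite esum_colsum; apply: const_mean.
under eq_bigr => i _ do under eq_bigr => j _ do rewrite r_mean c_mean -mulrA.
by rewrite -mulrA [RHS]mulr_esuml.
Qed.

Hypotheses (rho_ge0 : 0 <= rho) (gamma_ge0 : 0 <= gamma).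
Hypotheses (rowsum_ge : forall i, 2 * rho <= r i) (colsum_ge : forall j, 2 * gamma <= c j).

Lemma rbar_ge : 2 * rho <= rbar.
Proof. by rewrite esum_rowsum; apply: mean_ge. Qed.

Lemma cbar_ge : 2 * gamma <= cbar.
Proof. by rewrite esum_colsum; apply: mean_ge. Qed.

Let rho_le_rbar : rho <= rbar.
Proof. by rewrite (le_trans _ rbar_ge) // mulr_natl mulr2n lerDr. Qed.

Let gamma_le_cbar : gamma <= cbar.
Proof. by rewrite (le_trans _ cbar_ge) // mulr_natl mulr2n lerDr. Qed.

Lemma defect_term_ge0 i j : 0 <= defect_term i j.
Proof.
have [->|a_neq0] := eqVneq (a i j) 0; first by rewrite mul0r.
have r_gt0 := rowsum_gt0 a_ge0 a_neq0; have c_gt0 := colsum_gt0 a_ge0 a_neq0.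
apply: mulr_ge0 (a_ge0 i j) (divr_ge0 _ (mulr_ge0 (ltW r_gt0) (ltW c_gt0))).
exact: defect_ge0 (rowsum_ge i) (colsum_ge j) rbar_ge cbar_ge.
Qed.

Let zero_rows_term_ge0 : 0 <= (cbar - gamma) * rbar * (rbar *+ #|[pred i | r i == 0]|).
Proof.
have rbar_ge0 : 0 <= rbar := le_trans rho_ge0 rho_le_rbar.
by rewrite mulr_ge0 ?mulrn_wge0 // mulr_ge0 // subr_ge0.
Qed.

Let zero_cols_term_ge0 : 0 <= (rbar - rho) * cbar * (cbar *+ #|[pred j | c j == 0]|).
Proof.
have cbar_ge0 : 0 <= cbar := le_trans gamma_ge0 gamma_le_cbar.
by rewrite mulr_ge0 ?mulrn_wge0 // mulr_ge0 // subr_ge0.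
Qed.

Lemma margin_sum_ge : margin_bound <= margin_sum.
Proof.
rewrite margin_sum_decomposition -!addrA lerDl !addr_ge0 //.
by apply: sumr_ge0 => i _; apply: sumr_ge0 => j _; apply: defect_term_ge0.
Qed.

Let means_gt0 : 0 < e -> 0 < rbar /\ 0 < cbar.
Proof. by move=> e_gt0; rewrite !divr_gt0 ?ltr0n. Qed.

Lemma excess_eq0_of_margin_sum_eq : 0 < e -> margin_sum = margin_bound ->
  [/\ #|[pred i | r i == 0]| = 0%N, #|[pred j | c j == 0]| = 0%N
    & forall i j, defect_term i j = 0].
Proof.
move=> e_gt0; rewrite margin_sum_decomposition => eq_bound.
have [rbar_gt0 cbar_gt0] := means_gt0 e_gt0.
have rho_lt_rbar : rho < rbar by have := rbar_ge; lra.
have gamma_lt_cbar : gamma < cbar by have := cbar_ge; lra.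
have defects_ge0 i : 0 <= \sum_j defect_term i j.
  by apply: sumr_ge0 => j _; apply: defect_term_ge0.
have defects_sum_ge0 : 0 <= \sum_(i < v) \sum_(j < w) defect_term i j.
  by apply: sumr_ge0 => i _; apply: defects_ge0.
have rows_term_ge0 := zero_rows_term_ge0; have cols_term_ge0 := zero_cols_term_ge0.
have /eqP : (cbar - gamma) * rbar * (rbar *+ #|[pred i | r i == 0]|) = 0 by lra.
rewrite mulf_eq0 mulrn_eq0 mulf_eq0 subr_eq0 (gt_eqF gamma_lt_cbar) (gt_eqF rbar_gt0) /= orbF.
move=> /eqP rows0.
have /eqP : (rbar - rho) * cbar * (cbar *+ #|[pred j | c j == 0]|) = 0 by lra.
rewrite mulf_eq0 mulrn_eq0 mulf_eq0 subr_eq0 (gt_eqF rho_lt_rbar) (gt_eqF cbar_gt0) /= orbF.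
move=> /eqP cols0.
have defects0 : \sum_(i < v) \sum_(j < w) defect_term i j = 0 by lra.
split=> // i j.
have row_defects0 := @psumr_eq0P _ _ _ _ (fun i _ => defects_ge0 i) defects0 i isT.
exact: @psumr_eq0P _ _ _ _ (fun j _ => defect_term_ge0 i j) row_defects0 j isT.
Qed.

Lemma margins_mean_of_eq : 0 < e -> margin_sum = margin_bound ->
  (forall i, r i = rbar) /\ (forall j, c j = cbar).
Proof.
move=> e_gt0 eq_bound.
have [rows0 cols0 defects0] := excess_eq0_of_margin_sum_eq e_gt0 eq_bound.
have [rbar_gt0 cbar_gt0] := means_gt0 e_gt0.
have entry_margins i j : a i j != 0 -> r i = rbar /\ c j = cbar.
  move=> a_neq0; have r_gt0 := rowsum_gt0 a_ge0 a_neq0; have c_gt0 := colsum_gt0 a_ge0 a_neq0.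
  apply: (defect_eq0 r_gt0 c_gt0 rho_ge0 gamma_ge0 (rowsum_ge i) (colsum_ge j)
    rbar_gt0 cbar_gt0 rbar_ge cbar_ge).
  move/eqP: (defects0 i j); rewrite mulf_eq0 (negbTE a_neq0) mulf_eq0 invr_eq0 mulf_eq0.
  by rewrite (gt_eqF r_gt0) (gt_eqF c_gt0) /= orbF => /eqP.
split=> [i|j].
- have /negbT r_neq0 : (r i == 0) = false by have := card0_eq rows0 i; rewrite !inE.
  by have [j /entry_margins []] := rowsum_support r_neq0.
- have /negbT c_neq0 : (c j == 0) = false by have := card0_eq cols0 j; rewrite !inE.
  by have [i /entry_margins []] := colsum_support c_neq0.
Qed.

Lemma margins_const_of_eq : margin_sum = margin_bound ->
  (forall i i', r i = r i') /\ (forall j j', c j = c j').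
Proof.
move=> eq_bound; have [e0|e_neq0] := eqVneq e 0.
  have r0 i : r i = 0.
    by rewrite esum_rowsum in e0; apply: (psumr_eq0P (fun i _ => rowsum_ge0 a_ge0 i) e0).
  have c0 j : c j = 0.
    by rewrite esum_colsum in e0; apply: (psumr_eq0P (fun j _ => colsum_ge0 a_ge0 j) e0).
  by split=> [i i'|j j']; rewrite ?r0 ?c0.
have e_gt0 : 0 < e by rewrite lt_def e_neq0 esum_rowsum sumr_ge0 // => i _; apply: rowsum_ge0.
have [r_mean c_mean] := margins_mean_of_eq e_gt0 eq_bound.
by split=> [i i'|j j']; rewrite ?r_mean ?c_mean.
Qed.

End MarginSum.

Theorem theorem4p4 (R : realFieldType) (v w : nat) (a : 'M[R]_(v, w)) (rho gamma : R) :
  (0 < v)%N -> (0 < w)%N ->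
  (forall i j, 0 <= a i j) -> 0 <= rho -> 0 <= gamma ->
  (forall i, 2 * rho <= rowsum a i) ->
  (forall j, 2 * gamma <= colsum a j) ->
  esum a * (esum a / v%:R - rho) * (esum a / w%:R - gamma)
    <= \sum_(i < v) \sum_(j < w) a i j * (rowsum a i - rho) * (colsum a j - gamma)
  /\
  (\sum_(i < v) \sum_(j < w) a i j * (rowsum a i - rho) * (colsum a j - gamma)
     = esum a * (esum a / v%:R - rho) * (esum a / w%:R - gamma)
   <-> (forall i i', rowsum a i = rowsum a i') /\ (forall j j', colsum a j = colsum a j')).
Proof.
move=> v_gt0 w_gt0 a_ge0 rho_ge0 gamma_ge0 rowsum_ge colsum_ge.
split; first exact: margin_sum_ge.
split; first exact: margins_const_of_eq.
by case; apply: margin_sum_const_margins.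
Qed.
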